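(* Let $q$ be a prime power, let $b,n\in\mathbb{N}$ with $b<n$, and let $\mathcal S_q=\{\mathbf x\in\mathbb F_q^n:\mathrm{wt}(\mathbf x)\le b\}$. Let $\delta\in(0,(1-q^{-1})/2)$ and $m,m',m'',s\in\mathbb{N}$ with $m>m'\ge m''s$ and $\delta m\in\mathbb N$, and let $\mathcal N(\delta)=\{\mathbf w\in\mathbb F_q^m:\mathrm{wt}(\mathbf w)\le\delta m\}$. Fix a primitive polynomial of degree $s$ over $\mathbb F_q$ with root $\alpha\in\mathbb F_{q^s}$ and the associated map $\phi_s:\mathbb F_q^{m''s\times n}\to\mathbb F_{q^s}^{m''\times n}$. Suppose $\mathbf A=\mathbf G\mathbf A'$, where $\mathbf G\in\mathbb F_q^{m\times m'}$ is a generator matrix of an $[m,m',d]_q$ linear code with $d>2\delta m$, and $\mathbf A'\in\mathbb F_q^{m'\times n}$ is such that some set of $m''s$ rows of $\mathbf A'$ forms a matrix $\mathbf A''$ for which $\phi_s(\mathbf A'')$ is a parity check matrix of an $[n,n-m'',d']_{q^s}$ linear code with $d'>2b$. Then $\mathbf x$ can be exactly recovered from $\mathbf y=\mathbf A\mathbf x+\mathbf w$: there is a map $D:\mathbb F_q^m\to\mathbb F_q^n$ with $D(\mathbf A\mathbf x+\mathbf w)=\mathbf x$ for all $\mathbf x\in\mathcal S_q$ and all $\mathbf w\in\mathcal N(\delta)$.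
   Context: $\mathbb F_q$ is the finite field with $q$ elements; $\mathrm{wt}(\mathbf x)$ is the number of nonzero entries of $\mathbf x$. A primitive polynomial of degree $s$ over $\mathbb F_q$ is a monic irreducible polynomial of degree $s$ having a primitive element $\alpha$ of $\mathbb F_{q^s}$ as a root. For $M=M's$ and $\mathbf C=[c_{ij}]\in\mathbb F_q^{M\times n}$, $\phi_s(\mathbf C)=[c'_{kl}]\in\mathbb F_{q^s}^{M'\times n}$ with $c'_{kl}=\sum_{t=0}^{s-1}c_{(k-1)s+t+1,\,l}\,\alpha^t$. An $[N,K,D]_Q$ linear code is a $K$-dimensional subspace of $\mathbb F_Q^N$ with minimum Hamming distance $D$; a generator matrix is an $N\times K$ matrix of rank $K$ whose column space is the code; a parity check matrix is an $(N-K)\times N$ matrix of rank $N-K$ whose null space is the code. *)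

From HB Require Import structures.
From mathcomp Require Import all_boot all_order all_algebra.
Set Implicit Arguments. Unset Strict Implicit. Unset Printing Implicit Defensive.
Import Order.TTheory GRing.Theory Num.Theory.
Local Open Scope ring_scope.

Definition wt (R : zmodType) (n : nat) (v : 'cV[R]_n) : nat :=
  #|[set i : 'I_n | v i 0 != 0]|.

Definition hdist (R : zmodType) (n : nat) (u v : 'cV[R]_n) : nat := wt (u - v).

Definition min_dist_is (R : zmodType) (n : nat) (C : {pred 'cV[R]_n}) (D : nat) : Prop :=
  (exists c1, exists c2, [/\ c1 \in C, c2 \in C, c1 != c2 & hdist c1 c2 = D]) /\
  (forall c1 c2, c1 \in C -> c2 \in C -> c1 != c2 -> (D <= hdist c1 c2)%N).

Definition is_generator_matrix (R : fieldType) (N K : nat)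
    (G : 'M[R]_(N, K)) (C : {pred 'cV[R]_N}) : Prop :=
  \rank G = K /\ (forall c, c \in C <-> exists u : 'cV[R]_K, c = G *m u).

Definition is_parity_check_matrix (R : fieldType) (r N : nat)
    (H : 'M[R]_(r, N)) (C : {pred 'cV[R]_N}) : Prop :=
  \rank H = r /\ (forall c, c \in C <-> H *m c = 0).

Definition is_linear_code (R : fieldType) (N K D : nat) (C : {pred 'cV[R]_N}) : Prop :=
  [/\ (0 : 'cV[R]_N) \in C,
      (forall a (u v : 'cV[R]_N), u \in C -> v \in C -> a *: u + v \in C),
      (exists B : 'M[R]_(N, K), is_generator_matrix B C)
    & min_dist_is C D].

Lemma phi_row_lt (M s : nat) (k : 'I_M) (t : 'I_s) : (k * s + t < M * s)%N.
Proof.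
have kM := ltn_ord k; have ts := ltn_ord t.
apply: (@leq_trans (k * s + s)); first by rewrite ltn_add2l.
by rewrite -mulSnr leq_mul2r kM orbT.
Qed.

(* Index (k-1)s + t + 1 in the paper's 1-based notation, i.e. k*s + t 0-based. *)
Definition phi_row (M s : nat) (k : 'I_M) (t : 'I_s) : 'I_(M * s) :=
  Ordinal (phi_row_lt k t).

Definition phi_s (F L : fieldType) (iota : {rmorphism F -> L}) (alpha : L)
    (M s n : nat) (C : 'M[F]_(M * s, n)) : 'M[L]_(M, n) :=
  \matrix_(k < M, l < n) \sum_(t < s) iota (C (phi_row k t) l) * alpha ^+ t.

(* Decoding is unique, hence a decoder exists (pick the unique preimage).
   If A x1 + w1 = A x2 + w2 then G (A' x1 - A' x2) = w2 - w1 has weight at most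
   2 delta m < d, so it vanishes and, G having full column rank, A' x1 = A' x2.
   Then A'' (x1 - x2) = 0; since phi_s commutes with right multiplication by
   F_q-matrices, the lift of x1 - x2 to F_{q^s} lies in the code checked by
   phi_s(A''), and its weight is at most 2b < d', so x1 = x2. *)

From HB Require Import structures.
From mathcomp Require Import all_boot all_order all_algebra.
Import Order.TTheory GRing.Theory Num.Theory.
Local Open Scope ring_scope.

Set Implicit Arguments.
Unset Strict Implicit.

Lemma wtB (R : zmodType) (n : nat) (u v : 'cV[R]_n) :
  (wt (u - v) <= wt u + wt v)%N.
Proof.
rewrite /wt; apply: leq_trans (leq_card_setU _ _).
apply: subset_leq_card; apply/subsetP => i; rewrite !inE !mxE.
by apply: contraR; rewrite negb_or !negbK => /andP[/eqP -> /eqP ->]; rewrite subr0.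
Qed.

Lemma wt_map_mx (F L : fieldType) (iota : {rmorphism F -> L}) (n : nat)
    (v : 'cV[F]_n) :
  wt (map_mx iota v) = wt v.
Proof. by apply: eq_card => i; rewrite !inE mxE fmorph_eq0. Qed.

Lemma linear_code_wt_lt_eq0 (R : fieldType) (N K D : nat)
    (C : {pred 'cV[R]_N}) (c : 'cV[R]_N) :
  is_linear_code K D C -> c \in C -> (wt c < D)%N -> c = 0.
Proof.
case=> C0 _ _ [_ min_dist] cC wt_c; apply/eqP; apply: contraTT wt_c => c_neq0.
by rewrite -leqNgt; have := min_dist _ _ cC C0 c_neq0; rewrite /hdist subr0.
Qed.

Lemma phi_s_mulmx (F L : fieldType) (iota : {rmorphism F -> L}) (alpha : L)
    (M s n p : nat) (C : 'M[F]_(M * s, n)) (B : 'M[F]_(n, p)) :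
  phi_s iota alpha (C *m B) = phi_s iota alpha C *m map_mx iota B.
Proof.
apply/matrixP => k j; rewrite !mxE.
under [RHS]eq_bigr => l _ do rewrite !mxE big_distrl /=.
rewrite exchange_big /=; apply: eq_bigr => t _.
rewrite !mxE rmorph_sum big_distrl /=; apply: eq_bigr => l _.
by rewrite rmorphM /= mulrAC.
Qed.

Lemma generator_mx_dec_uniq (R : fieldType) (N K D t : nat)
    (C : {pred 'cV[R]_N}) (G : 'M[R]_(N, K)) (u1 u2 : 'cV[R]_K)
    (w1 w2 : 'cV[R]_N) :
  is_linear_code K D C -> is_generator_matrix G C -> (2 * t < D)%N ->
  (wt w1 <= t)%N -> (wt w2 <= t)%N ->
  G *m u1 + w1 = G *m u2 + w2 -> u1 = u2.
Proof.
move=> codeC [rankG genG] tD w1t w2t eq_y.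
have G_diff : G *m (u1 - u2) = w2 - w1.
  rewrite mulmxBr.
  have -> : G *m u1 = G *m u2 + w2 - w1 by rewrite -eq_y addrK.
  by rewrite addrAC [G *m u2 + _]addrC addrK.
have G_diff0 : G *m (u1 - u2) = 0.
  apply: (linear_code_wt_lt_eq0 codeC); first by apply/genG; exists (u1 - u2).
  rewrite G_diff; apply: leq_ltn_trans (wtB _ _) _.
  by apply: leq_ltn_trans tD; rewrite mul2n -addnn leq_add.
have freeGT : row_free G^T by rewrite /row_free mxrank_tr rankG.
apply/eqP; rewrite -subr_eq0; apply/eqP/trmx_inj/(row_free_inj freeGT).
by rewrite -trmx_mul G_diff0 !trmx0 mul0mx.
Qed.

Lemma parity_check_mx_inj (R : fieldType) (r N K D : nat)
    (C : {pred 'cV[R]_N}) (H : 'M[R]_(r, N)) (x1 x2 : 'cV[R]_N) :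
  is_linear_code K D C -> is_parity_check_matrix H C ->
  (wt x1 + wt x2 < D)%N -> H *m x1 = H *m x2 -> x1 = x2.
Proof.
move=> codeC [_ checkH] wtD eqH.
have diffC : x1 - x2 \in C by apply/checkH; rewrite mulmxBr eqH subrr.
apply/eqP; rewrite -subr_eq0; apply/eqP.
exact: linear_code_wt_lt_eq0 codeC diffC (leq_ltn_trans (wtB _ _) wtD).
Qed.

Lemma decoder_of_dec_uniq (X W : finType) (Y : eqType) (x0 : X)
    (enc : X -> W -> Y) (P : pred X) (Q : pred W) :
  (forall x1 x2 w1 w2, P x1 -> Q w1 -> P x2 -> Q w2 ->
     enc x1 w1 = enc x2 w2 -> x1 = x2) ->
  exists D : Y -> X, forall x w, P x -> Q w -> D (enc x w) = x.
Proof.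
move=> dec_uniq.
exists (fun y => odflt x0 [pick x | [exists w, [&& P x, Q w & y == enc x w]]]).
move=> x w Px Qw; case: pickP => [x' /existsP[w' /and3P[Px' Qw' /eqP eq_y]] | none].
  exact: dec_uniq Px' Qw' Px Qw (esym eq_y).
by have /existsP[] := negbT (none x); exists w; rewrite Px Qw eqxx.
Qed.

Theorem theorem3
  (F L : finFieldType) (iota : {rmorphism F -> L})
  (b n : nat) (delta : rat) (m m' m'' s : nat) (dm : nat)
  (p : {poly F}) (alpha : L)
  (G : 'M[F]_(m, m')) (A' : 'M[F]_(m', n)) (A : 'M[F]_(m, n))
  (d d' : nat)
  (f : 'I_(m'' * s) -> 'I_m') :
  (b < n)%N ->
  0 < delta -> delta < (1 - (#|F|%:R)^-1) / 2 ->
  (m' < m)%N -> (m'' * s <= m')%N ->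
  delta * m%:R = dm%:R ->
  #|L| = (#|F| ^ s)%N ->
  p \is monic -> irreducible_poly p -> size p = s.+1 ->
  root (map_poly iota p) alpha ->
  (#|L|.-1).-primitive_root alpha ->
  A = G *m A' ->
  (exists CG : {pred 'cV[F]_m},
      is_linear_code m' d CG /\ is_generator_matrix G CG) ->
  (2 * dm < d)%N ->
  injective f ->
  (exists CH : {pred 'cV[L]_n},
      is_linear_code (n - m'') d' CH /\
      is_parity_check_matrix (phi_s iota alpha (rowsub f A')) CH) ->
  (2 * b < d')%N ->
  exists D : 'cV[F]_m -> 'cV[F]_n,
    forall (x : 'cV[F]_n) (w : 'cV[F]_m),
      (wt x <= b)%N -> (wt w <= dm)%N -> D (A *m x + w) = x.
Proof.
move=> _ _ _ _ _ _ _ _ _ _ _ _ -> [CG [codeG genG]] dmd _ [CH [codeH checkH]] bd'.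
apply: (@decoder_of_dec_uniq 'cV[F]_n 'cV[F]_m _ 0
  (fun x w => G *m A' *m x + w) (fun x => wt x <= b)%N (fun w => wt w <= dm)%N).
move=> x1 x2 w1 w2 /= x1b w1dm x2b w2dm eq_y.
have eqA' : A' *m x1 = A' *m x2.
  by apply: generator_mx_dec_uniq codeG genG dmd w1dm w2dm _; rewrite !mulmxA.
have eqA'' : rowsub f A' *m x1 = rowsub f A' *m x2.
  by rewrite rowsubE -!mulmxA eqA'.
apply: (@map_mx_inj _ _ iota).
apply: parity_check_mx_inj codeH checkH _ _.
  by rewrite !wt_map_mx; apply: leq_ltn_trans bd'; rewrite mul2n -addnn leq_add.
by rewrite -!phi_s_mulmx eqA''.
Qed.
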